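(* Fix an arbitrary execution of Algorithm $\mathrm{tree}(G)$ on $G$, and let the rank $r$ and the set $U$ be as defined in the context. If $u,v,w$ are distinct vertices of $G$ with $uv,vw\in E(G)$, $\{u,v\}\subseteq U$, and $r(u)<r(v)<r(w)$, then $d_G(v)=2$.
   Context: $G$ is a finite connected simple undirected graph containing a vertex $a$ with $d_G(a)\ge 2$. For a subtree $T$ of $G$ and a vertex $u$ of $T$: - $V_T(u)$ is the set of vertices $v\in V(G)\setminus V(T)$ with $uv\in E(G)$. - $E_T(u)$ is the set of edges $uv$ of $G$ with $v\in V_T(u)$. - If $|V_T(u)|=1$, then $v_T(u)$ denotes the unique vertex of $V_T(u)$. Three sets of vertices of $T$ are defined: - $W_2(T)=\{u\in V(T): |V_T(u)|\ge 2\}$. - $W_1(T)=\{u\in V(T): |V_T(u)|=1,\ |V_{T\cup E_T(u)}(v_T(u))|\ge 2\}$. - $W_0(T)=\{u\in V(T): |V_T(u)|=1,\ |V_{T\cup E_T(u)}(v_T(u))|\le 1\}$. Algorithm $\mathrm{tree}(G)$ runs as follows. 1. Start with $T=\{a\}$. 2. While $V(T)\ne V(G)$: - If $W_2(T)\ne\emptyset$, pick an arbitrary $u\in W_2(T)$. - Else, if $W_1(T)\neq\emptyset$, pick an arbitrary $u\in W_1(T)$. - Else, let $u$ be the vertex of $W_0(T)$ that joined $V(T)$ most recently. - Set $T:=T\cup E_T(u)$ (''expand $T$ at $u$''). 3. Return $T$. Now fix an execution and let $T$ be the returned spanning tree, rooted at $a$. For $v\ne a$, let $p(v)$ be the parent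 of $v$ in $T$. For each vertex $u$ with $d_T(u)\ge 2$, the algorithm expanded at $u$ exactly once; let $T_u$ be the tree just before that expansion. Thus $u=p(v)$ if and only if $v\in V_{T_u}(u)$. The rank $r:V(G)\to\mathbb{Z}$ is defined by $r(a)=1$ and, for each edge $uv$ of $T$ with $u=p(v)$: - $r(v)=r(u)$ if $u\in W_2(T_u)$; - $r(v)=1+\max_{w\in V(T_u)} r(w)$ otherwise. $U$ is the set of vertices $v$ such that no other vertex has rank $r(v)$. *)

From mathcomp Require Import all_boot.
Set Implicit Arguments. Unset Strict Implicit. Unset Printing Implicit Defensive.

(* A graph is a relation e on a finite type T (assumed symmetric, irreflexive). *)
Section TreeAlgo.
Variables (T : finType) (e : rel T) (a : T).

Definition Vout (S : {set T}) (u : T) : {set T} := [set v | e u v & v \notin S].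

(* W_2, W_1, W_0 for the current tree with vertex set S.  The tree
   T \cup E_T(u) has vertex set v_T(u) |: S. *)
Definition inW2 (S : {set T}) (u : T) : bool :=
  (u \in S) && (1 < #|Vout S u|).
Definition inW1 (S : {set T}) (u : T) : bool :=
  [&& u \in S, #|Vout S u| == 1 &
      [exists v, (v \in Vout S u) && (1 < #|Vout (v |: S) v|)]].
Definition inW0 (S : {set T}) (u : T) : bool :=
  [&& u \in S, #|Vout S u| == 1 &
      [forall v, (v \in Vout S u) ==> (#|Vout (v |: S) v| <= 1)]].

(* An execution is given by the sequence of expanded vertices pick 0, pick 1, ...
   stateS pick i = vertex set of the tree after i expansions. *)
Fixpoint stateS (pick : nat -> T) (i : nat) : {set T} :=
  match i with
  | 0 => [set a]
  | i'.+1 => stateS pick i' :|: Vout (stateS pick i') (pick i')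
  end.

(* jtime pick i v = the number of the expansion at which v joined the tree
   (0 for a), meaningful for v \in stateS pick i. *)
Fixpoint jtime (pick : nat -> T) (i : nat) (v : T) : nat :=
  match i with
  | 0 => 0
  | i'.+1 => if v \in stateS pick i' then jtime pick i' v else i
  end.

(* rank pick i v = the rank r(v), meaningful for v \in stateS pick i. *)
Fixpoint rank (pick : nat -> T) (i : nat) (v : T) : nat :=
  match i with
  | 0 => 1
  | i'.+1 =>
      let S := stateS pick i' in
      let u := pick i' in
      if v \in S then rank pick i' v
      else if inW2 S u then rank pick i' u
      else (\max_(w in S) rank pick i' w).+1
  end.

Definition valid_step (pick : nat -> T) (i : nat) : bool :=
  let S := stateS pick i in
  let u := pick i in
  if [exists x, inW2 S x] then inW2 S u
  else if [exists x, inW1 S x] then inW1 S u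
  else inW0 S u && [forall x, inW0 S x ==> (jtime pick i x <= jtime pick i u)].

Definition valid_exec (pick : nat -> T) (k : nat) : Prop :=
  (forall i, i < k -> stateS pick i != setT /\ valid_step pick i) /\
  stateS pick k = setT.

Definition final_rank (pick : nat -> T) (k : nat) : T -> nat := rank pick k.
Definition Uset (pick : nat -> T) (k : nat) : {set T} :=
  [set v | [forall w, (w != v) ==> (final_rank pick k w != final_rank pick k v)]].

End TreeAlgo.

From mathcomp Require Import all_boot.
Set Implicit Arguments. Unset Strict Implicit. Unset Printing Implicit Defensive.

(* A vertex of U never shares its rank.  Hence it is not added by a
   W_2-expansion (parent and children get equal ranks), and it never becomes
   the unique W_2-vertex right after joining.  So u joins the tree alone, at a
   step where the tree has neither W_2- nor W_1-vertices, and receives a fresh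
   maximal rank; as r(u) < r(v), the vertex v is still outside, it is u's only
   outside neighbour, and u is expanded at once.  The same reasoning makes v
   join alone with a fresh maximal rank, so w is still outside and is v's only
   outside neighbour.  A neighbour x of v in the old tree would have had v as
   unique outside neighbour while v has two (u and w), i.e. x would have been
   a W_1-vertex. *)

Section Frontier.
Variables (T : finType) (e : rel T).
Implicit Types (X Y : {set T}).

Definition narrow X := {in X, forall z, #|Vout e X z| <= 1}.

Lemma VoutS X Y z : X \subset Y -> Vout e Y z \subset Vout e X z.
Proof.
move=> sXY; apply/subsetP => x; rewrite !inE => /andP[-> xY] /=.
by apply: contra xY; apply: (subsetP sXY).
Qed.

Lemma narrowP X : reflect (narrow X) (~~ [exists x, inW2 e X x]).
Proof.
apply: (iffP existsPn) => [noW2 z zX | nX z].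
  by move: (noW2 z); rewrite /inW2 zX -leqNgt.
by rewrite /inW2 negb_and -leqNgt; case: (boolP (z \in X)) => // /nX ->.
Qed.

Lemma narrow_notW2 X z : narrow X -> ~~ inW2 e X z.
Proof. by move/narrowP/existsPn. Qed.

Lemma narrowU1 X y : narrow X -> #|Vout e (y |: X) y| <= 1 -> narrow (y |: X).
Proof.
move=> nX cy z; rewrite in_setU1 => /predU1P[-> // | zX].
exact: leq_trans (subset_leq_card (VoutS _ (subsetUr _ _))) (nX z zX).
Qed.

Lemma card_Vout1 X z y :
  #|Vout e X z| <= 1 -> y \in Vout e X z -> Vout e X z = [set y].
Proof. by move=> c1 yV; apply/esym/eqP; rewrite eqEcard sub1set yV cards1. Qed.

Lemma inW1S X Y q :
  X \subset Y -> q \in X -> #|Vout e X q| <= 1 -> inW1 e Y q -> inW1 e X q.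
Proof.
move=> sXY qX c1 /and3P[_ _ /existsP[y /andP[yVY cy]]].
have yVX : y \in Vout e X q := subsetP (VoutS q sXY) y yVY.
rewrite /inW1 qX {1}(card_Vout1 c1 yVX) cards1 /=; apply/existsP; exists y.
by rewrite yVX (leq_trans cy) //; apply/subset_leq_card/VoutS/setUS.
Qed.

Lemma notW1_Vout X x v :
    narrow X -> ~~ [exists x, inW1 e X x] -> x \in X -> v \in Vout e X x ->
  #|Vout e (v |: X) v| <= 1.
Proof.
move=> nX /existsPn/(_ x) + xX vV.
rewrite /inW1 xX (card_Vout1 (nX x xX) vV) cards1 /= => /existsPn/(_ v).
by rewrite set11 /= -leqNgt.
Qed.

Hypotheses (e_sym : symmetric e) (e_irr : irreflexive e).

Lemma neighbours_second_child X u v w :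
    narrow X -> ~~ [exists x, inW1 e X x] -> u \notin X -> v \notin X -> u != v ->
    w \notin v |: (u |: X) -> #|Vout e (v |: (u |: X)) v| <= 1 ->
    e v u -> e v w ->
  #|[set x | e v x]| = 2.
Proof.
move=> nX noW1 uX vX uv wS cv evu evw.
move: (wS); rewrite !in_setU1 => /norP[wv /norP[wu wX]].
have Vv_uw : [set u; w] \subset Vout e (v |: X) v.
  apply/subsetP => y /set2P[->|->];
  by rewrite !inE negb_or ?evu ?evw ?uv ?wv ?uX ?wX.
suff -> : [set x | e v x] = [set u; w] by rewrite cards2 eq_sym wu.
apply/setP => x; rewrite !inE; apply/idP/idP => [evx|/orP[]/eqP->] //.
case: (eqVneq x u) => //= xu; case: (eqVneq x w) => // xw.
have xv : x != v by apply: contraTneq evx => ->; rewrite e_irr.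
case: (boolP (x \in v |: (u |: X))) => [|xS].
  rewrite !in_setU1 (negbTE xv) (negbTE xu) /= => xX.
  have vV : v \in Vout e X x by rewrite inE e_sym evx vX.
  have := leq_trans (subset_leq_card Vv_uw) (notW1_Vout nX noW1 xX vV).
  by rewrite cards2 eq_sym wu.
have : [set x; w] \subset Vout e (v |: (u |: X)) v.
  by apply/subsetP => y /set2P[->|->]; rewrite inE ?evx ?evw ?xS ?wS.
by move/subset_leq_card/leq_trans/(_ cv); rewrite cards2 xw.
Qed.

End Frontier.

Section Execution.
Variables (T : finType) (e : rel T) (a : T) (pick : nat -> T).

Local Notation St := (stateS e a pick).
Local Notation rk := (rank e a pick).

Lemma stateS_mono : {homo St : i j / i <= j >-> i \subset j}.
Proof.
move=> i j /subnK <-; elim: (j - i) => [|n IH] //=.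
exact: subset_trans IH (subsetUl _ _).
Qed.

Lemma stateS_join v k :
  v \in St k -> v \notin St 0 -> exists2 j, j < k & v \notin St j /\ v \in St j.+1.
Proof.
elim: k => [-> // | k IH] vk v0.
case: (boolP (v \in St k)) => [vS | vnS]; last by exists k.
by have [j jk jv] := IH vS v0; exists j => //; apply: ltnW.
Qed.

Lemma jtime_le i v : jtime e a pick i v <= i.
Proof. by elim: i => //= i IH; case: ifP => // _; apply: leq_trans IH _. Qed.

Lemma rank_stable i j v : i <= j -> v \in St i -> rk j v = rk i v.
Proof.
move=> /subnK <- vi; elim: (j - i) => [|n IH] //=.
by rewrite (subsetP (stateS_mono (leq_addl n i)) v vi).
Qed.

Definition top_rank i := \max_(w in St i) rk i w.

Lemma rank_le_top i j v : i <= j -> v \in St i -> rk j v <= top_rank i.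
Proof. by move=> ij vi; rewrite (rank_stable ij vi); apply: leq_bigmax_cond. Qed.

Lemma rank_narrow_join i y :
  narrow e (St i) -> y \in St i.+1 -> y \notin St i -> rk i.+1 y = (top_rank i).+1.
Proof. by move=> nS _ /= /negbTE ->; rewrite (negbTE (narrow_notW2 _ nS)). Qed.

Lemma rank_W2_child i y :
    inW2 e (St i) (pick i) -> y \in Vout e (St i) (pick i) ->
  rk i.+1 y = rk i.+1 (pick i).
Proof.
move=> W2 yV; have /andP[pS _] := W2; move: yV; rewrite inE => /andP[_ /negbTE yS].
by rewrite /= yS pS W2.
Qed.

Lemma rank_le_join i j x y :
    i < j -> narrow e (St i) -> St i.+1 = y |: St i -> y \notin St i ->
  x \in St i.+1 -> rk j x <= rk j y.
Proof.
move=> ij nS Si1 yS; rewrite Si1 in_setU1 => /predU1P[-> // | xS].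
have yS1 : y \in St i.+1 by rewrite Si1 setU11.
rewrite (rank_stable ij yS1) (rank_narrow_join nS yS1 yS).
exact/leqW/(rank_le_top (ltnW ij)).
Qed.

Section ValidStep.
Variable i : nat.
Hypothesis step : valid_step e a pick i.

Lemma pick_in : pick i \in St i.
Proof.
move: step; rewrite /valid_step /=.
case: ifP => _; first by case/andP.
case: ifP => _; first by case/and3P.
by case/andP => /and3P[].
Qed.

Lemma pick_Vout1 : ~~ inW2 e (St i) (pick i) -> #|Vout e (St i) (pick i)| = 1.
Proof.
move: step; rewrite /valid_step /=.
case: ifP => _; first by move=> ->.
case: ifP => _; first by case/and3P => _ /eqP.
by case/andP => /and3P[_ /eqP].
Qed.

Lemma valid_step_W2 : [exists x, inW2 e (St i) x] -> inW2 e (St i) (pick i).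
Proof. by move=> W2; move: step; rewrite /valid_step /= W2. Qed.

Lemma valid_step_narrow : ~~ inW2 e (St i) (pick i) -> narrow e (St i).
Proof. by move=> pW2; apply/narrowP; apply: contra pW2 => /valid_step_W2. Qed.

Lemma valid_step_W1 :
  narrow e (St i) -> [exists x, inW1 e (St i) x] -> inW1 e (St i) (pick i).
Proof.
by move=> /narrowP /negbTE noW2 W1; move: step; rewrite /valid_step /= noW2 W1.
Qed.

Lemma valid_step_W0 x :
    narrow e (St i) -> ~~ [exists x, inW1 e (St i) x] -> inW0 e (St i) x ->
  jtime e a pick i x <= jtime e a pick i (pick i).
Proof.
move=> /narrowP /negbTE noW2 /negbTE noW1; move: step.
by rewrite /valid_step /= noW2 noW1 => /andP[_ /forallP/(_ x)/implyP].
Qed.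

End ValidStep.

Section CompleteRun.
Variable k : nat.
Hypothesis exec : valid_exec e a pick k.

Local Notation U := (Uset e a pick k).

Lemma exec_step i : i < k -> valid_step e a pick i.
Proof. by move=> ik; case: exec => /(_ i ik) []. Qed.

Lemma exec_unfinished i x : x \notin St i -> i < k.
Proof.
rewrite ltnNge; apply: contra => ki; case: exec => _ Sk.
by apply: (subsetP (stateS_mono ki)); rewrite Sk inE.
Qed.

Lemma Uset_rank_neq x y : x != y -> y \in U -> rk k x != rk k y.
Proof. by move=> xy; rewrite inE => /forallP/(_ x)/implyP; apply. Qed.

Lemma W2_child_rank i y :
    inW2 e (St i) (pick i) -> y \in Vout e (St i) (pick i) ->
  y != pick i /\ rk k y = rk k (pick i).
Proof.
move=> W2 yV; have /andP[pS _] := W2; have := yV; rewrite inE => /andP[_ yS].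
have ik := exec_unfinished yS.
have yS1 : y \in St i.+1 by rewrite /= inE yV orbT.
split; first by apply: contraNneq yS => ->.
rewrite (rank_stable ik yS1) (rank_stable ik (subsetP (stateS_mono (leqnSn i)) _ pS)).
exact: rank_W2_child.
Qed.

Lemma W2_child_notin_Uset i y :
  inW2 e (St i) (pick i) -> y \in Vout e (St i) (pick i) -> y \notin U.
Proof.
move=> W2 yV; have [yp ry] := W2_child_rank W2 yV.
have py : pick i != y by rewrite eq_sym.
by apply: contraTN (Uset_rank_neq py) _; rewrite ry.
Qed.

Lemma W2_pick_notin_Uset i : inW2 e (St i) (pick i) -> pick i \notin U.
Proof.
move=> W2; have /andP[_ /ltnW] := W2; rewrite card_gt0 => /set0Pn[y yV].
have [yp ry] := W2_child_rank W2 yV.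
by apply: contraTN (Uset_rank_neq yp) _; rewrite ry.
Qed.

Lemma Uset_child_narrow i y :
    narrow e (St i) -> St i.+1 = y |: St i -> y \in U ->
  #|Vout e (St i.+1) y| <= 1.
Proof.
move=> nS Si1 yU; rewrite leqNgt; apply/negP => cy.
have /set0Pn[x xV] : Vout e (St i.+1) y != set0 by rewrite -card_gt0 ltnW.
have step : valid_step e a pick i.+1.
  by apply/exec_step/(exec_unfinished (x := x)); move: xV; rewrite inE => /andP[].
have yS1 : y \in St i.+1 by rewrite Si1 setU11.
have W2p : inW2 e (St i.+1) (pick i.+1).
  by apply: valid_step_W2 => //; apply/existsP; exists y; rewrite /inW2 yS1 cy.
suff py : pick i.+1 = y by move: yU; rewrite -py (negbTE (W2_pick_notin_Uset W2p)).
have /andP[] := W2p; rewrite {1}Si1 in_setU1 => /predU1P[// | pS].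
rewrite ltnNge (leq_trans _ (nS _ pS)) //.
exact/subset_leq_card/VoutS/stateS_mono.
Qed.

Lemma a_notin_Uset : irreflexive e -> 1 < #|[set x | e a x]| -> a \notin U.
Proof.
move=> irr deg_a.
have Va : Vout e (St 0) a = [set x | e a x].
  by apply/setP => x; rewrite !inE; case: eqVneq => [->|]; rewrite ?irr ?andbT.
have /set0Pn[b bV] : Vout e (St 0) a != set0 by rewrite -card_gt0 Va ltnW.
have step : valid_step e a pick 0.
  by apply/exec_step/(exec_unfinished (x := b)); move: bV; rewrite inE => /andP[].
have pa : pick 0 = a by apply/set1P/(pick_in step).
have W2a : inW2 e (St 0) (pick 0).
  by apply: valid_step_W2 => //; apply/existsP; exists a; rewrite /inW2 Va deg_a inE eqxx.
by move: (W2_pick_notin_Uset W2a); rewrite pa.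
Qed.

Lemma Uset_join j y :
    y \in U -> y \notin St j -> y \in St j.+1 ->
  [/\ St j.+1 = y |: St j, narrow e (St j), ~~ [exists x, inW1 e (St j) x]
    & #|Vout e (St j.+1) y| <= 1].
Proof.
move=> yU yS yS1.
have yV : y \in Vout e (St j) (pick j) by move: yS1; rewrite /= inE (negbTE yS).
have step := exec_step (exec_unfinished yS).
have pW2 : ~~ inW2 e (St j) (pick j).
  by apply: contraTN yU => W2; apply: W2_child_notin_Uset W2 yV.
have Vp : Vout e (St j) (pick j) = [set y] by rewrite (card_Vout1 _ yV) ?pick_Vout1.
have nS := valid_step_narrow step pW2.
have Sj1 : St j.+1 = y |: St j by rewrite /= Vp setUC.
have cy := Uset_child_narrow nS Sj1 yU.
split=> //; apply/negP => /(valid_step_W1 step nS) /and3P[_ _ /existsP[x]].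
by rewrite Vp inE => /andP[/eqP-> ]; rewrite -Sj1 ltnNge cy.
Qed.

(* Old vertices only lose outside neighbours, so a W_1-vertex after the step
   would already have been one before it; among W_0-vertices the newcomer is
   the most recent. *)
Lemma pick_lone_child j y :
    St j.+1 = y |: St j -> y \notin St j -> narrow e (St j) ->
    ~~ [exists x, inW1 e (St j) x] -> #|Vout e (St j.+1) y| = 1 ->
  pick j.+1 = y.
Proof.
move=> Sj1 yS nS noW1 cy.
have /set0Pn[x xV] : Vout e (St j.+1) y != set0 by rewrite -card_gt0 cy.
have step : valid_step e a pick j.+1.
  by apply/exec_step/(exec_unfinished (x := x)); move: xV; rewrite inE => /andP[].
have yS1 : y \in St j.+1 by rewrite Sj1 setU11.
have nS1 : narrow e (St j.+1) by rewrite Sj1; apply: narrowU1; rewrite -?Sj1 ?cy.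
have := pick_in step; rewrite {1}Sj1 in_setU1 => /predU1P[// | pS].
case: (boolP [exists x, inW1 e (St j.+1) x]) => [W1 | noW1'].
  case/negP: noW1; apply/existsP; exists (pick j.+1).
  exact: inW1S (stateS_mono (leqnSn j)) pS (nS _ pS) (valid_step_W1 step nS1 W1).
have W0y : inW0 e (St j.+1) y.
  move/existsPn: noW1' => /(_ y); rewrite /inW1 /inW0 yS1 cy /= => /existsPn noW1y.
  by apply/forallP => z; apply/implyP => zV; move: (noW1y z); rewrite zV -leqNgt.
have := valid_step_W0 step nS1 noW1' W0y; rewrite /= (negbTE yS) pS => le.
by have := leq_trans le (jtime_le j (pick j.+1)); rewrite ltnn.
Qed.

End CompleteRun.

End Execution.

Theorem lemma1 (T : finType) (e : rel T) (a : T) (pick : nat -> T) (k : nat) :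
  symmetric e -> irreflexive e -> (forall x y, connect e x y) ->
  1 < #|[set x | e a x]| ->
  valid_exec e a pick k ->
  forall u v w : T, u != v -> v != w -> u != w ->
  e u v -> e v w ->
  u \in Uset e a pick k -> v \in Uset e a pick k ->
  final_rank e a pick k u < final_rank e a pick k v < final_rank e a pick k w ->
  #|[set x | e v x]| = 2.
Proof.
move=> e_sym e_irr _ deg_a exec u v w uv _ _ euv evw Uu Uv /andP[ruv rvw].
have uS0 : u \notin stateS e a pick 0.
  by rewrite inE; apply: contraTneq Uu => ->; apply: a_notin_Uset.
have uSk : u \in stateS e a pick k by case: exec => _ ->; rewrite inE.
have [j _ [uSj uSj1]] := stateS_join uSk uS0.
have [Sj1 nSj noW1 cu] := Uset_join exec Uu uSj uSj1.
have vSj1 : v \notin stateS e a pick j.+1.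
  apply: contraL ruv => vSj1; rewrite -leqNgt.
  exact: rank_le_join (exec_unfinished exec uSj) nSj Sj1 uSj vSj1.
have Vu : Vout e (stateS e a pick j.+1) u = [set v].
  by apply: card_Vout1 cu _; rewrite inE euv vSj1.
have pu : pick j.+1 = u.
  by apply: (pick_lone_child exec Sj1 uSj nSj noW1); rewrite Vu cards1.
have vSj2 : v \in stateS e a pick j.+2 by rewrite /= pu Vu !inE eqxx orbT.
have [Sj2 nSj1 _ cv] := Uset_join exec Uv vSj1 vSj2.
have wSj2 : w \notin stateS e a pick j.+2.
  apply: contraL rvw => wSj2; rewrite -leqNgt.
  exact: rank_le_join (exec_unfinished exec vSj1) nSj1 Sj2 vSj1 wSj2.
have vSj : v \notin stateS e a pick j.
  by apply: contra vSj1; apply/subsetP/stateS_mono.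
rewrite Sj2 Sj1 in wSj2 cv.
apply: (neighbours_second_child e_sym e_irr nSj noW1 uSj vSj uv wSj2 cv _ evw).
by rewrite e_sym.
Qed.
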